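(* For $q\in\{4,5\}$, the natural action of $\mathrm{PGL}_2(\mathbb{F}_q)$ on the projective line $\mathbb{P}^1(\mathbb{F}_q)$ cannot be sequenced.
   Context: $\mathrm{PGL}_2(\mathbb{F}_q)$ is the quotient of $\mathrm{GL}_2(\mathbb{F}_q)$ by the nonzero scalar matrices; it acts on $\mathbb{P}^1(\mathbb{F}_q)=\mathbb{F}_q\cup\{\infty\}$ by fractional linear transformations $z\mapsto (az+b)/(cz+d)$, and this action is sharply $3$-transitive (for any two ordered triples of distinct points there is exactly one group element mapping the first to the second). For a group $G$ acting sharply $k$-transitively on an $n$-element set $X$, a sequencing of $X$ is an enumeration $(x_1,\ldots,x_n)$ of all elements of $X$ such that the $n-k$ tuples $(x_1,\ldots,x_{k+1}),\ldots,(x_{n-k},\ldots,x_n)$ lie in pairwise distinct orbits of $G$ acting coordinatewise on ordered $(k+1)$-tuples of distinct elements of $X$. Here $n=q+1$ and $k=3$. *)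

From HB Require Import structures.
From mathcomp Require Import all_boot all_order all_algebra all_field.
Set Implicit Arguments. Unset Strict Implicit. Unset Printing Implicit Defensive.
Import GRing.Theory.
Local Open Scope ring_scope.

(* The projective line P^1(F) = F ∪ {∞} is modelled as [option F],
   with [None] standing for the point at infinity ∞. *)
Definition P1 (F : finFieldType) := option F.

(* This is the action of the
   class of the matrix [[a,b],[c,d]] (when ad - bc != 0) in PGL_2(F). *)
Definition mobius (F : finFieldType) (a b c d : F) (z : option F) : option F :=
  match z with
  | Some x => if c * x + d == 0 then None else Some ((a * x + b) / (c * x + d))
  | None => if c == 0 then None else Some (a / c)
  end.

(* Elements of PGL_2(F) are represented by
   invertible matrices [[a,b],[c,d]]; scalar multiples act identically. *)
Definition PGL2_same_orbit (F : finFieldType) (u v : seq (option F)) : Prop :=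
  exists a b c d : F, a * d - b * c != 0 /\ map (mobius a b c d) u = v.

(* The (k+1)-tuple (x_{i+1}, ..., x_{i+k+1}) of consecutive entries of s
   (0-based start index i). *)
Definition window (T : Type) (k i : nat) (s : seq T) : seq T :=
  take k.+1 (drop i s).

Definition PGL2_sequencing (F : finFieldType) (s : seq (option F)) : Prop :=
  [/\ uniq s, size s = #|{: option F}|%N &
      forall i j : nat, (i < j)%N -> (j + 3 < size s)%N ->
        ~ PGL2_same_orbit (window 3 i s) (window 3 j s)].

(** Sequencings are transported along field isomorphisms, because a ring
    morphism commutes with every fractional linear transformation.  A field of
    order 5 is 'F_5, and a field of order 4 is GF(2)(w) with w ^+ 2 = w + 1, so
    it suffices to exclude sequencings over these two concrete fields.  There
    the existence of a sequencing is decided by running through the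
    permutations of the 6, resp. 5, points of the projective line, testing each
    pair of windows against one matrix per element of PGL_2. *)

From HB Require Import structures.
From mathcomp Require Import all_boot all_order all_algebra all_field.
From mathcomp Require Import ring.
Set Implicit Arguments. Unset Strict Implicit. Unset Printing Implicit Defensive.
Import GRing.Theory.
Local Open Scope ring_scope.

Lemma window_map (T U : Type) (g : T -> U) k i (s : seq T) :
  window k i (map g s) = map g (window k i s).
Proof. by rewrite /window -map_drop -map_take. Qed.

Lemma mobius_scale (F : finFieldType) (k a b c d : F) : k != 0 ->
  mobius (k * a) (k * b) (k * c) (k * d) =1 mobius a b c d.
Proof.
move=> k_neq0 [x|] /=; last by rewrite mulf_eq0 (negbTE k_neq0) -mulf_div divff ?mul1r.
rewrite -mulrA -mulrDr mulf_eq0 (negbTE k_neq0) /=; case: eqP => //= _.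
by rewrite -mulrA -mulrDr -mulf_div divff ?mul1r.
Qed.

Section RmorphTransfer.

Variables (K F : finFieldType) (f : {rmorphism K -> F}).

Lemma mobius_rmorph a b c d :
  {morph omap f : z / mobius a b c d z >-> mobius (f a) (f b) (f c) (f d) z}.
Proof.
case=> [x|] /=; last by rewrite fmorph_eq0; case: eqP => //= _; rewrite fmorph_div.
rewrite -rmorphM -rmorphD fmorph_eq0; case: eqP => //= _.
by rewrite fmorph_div !rmorphD !rmorphM.
Qed.

Lemma PGL2_same_orbit_rmorph u v :
  PGL2_same_orbit u v -> PGL2_same_orbit (map (omap f) u) (map (omap f) v).
Proof.
move=> [a [b [c [d [det_neq0 <-]]]]]; exists (f a), (f b), (f c), (f d); split.
  by rewrite -!rmorphM -rmorphB fmorph_eq0.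
by rewrite -!map_comp; apply: eq_map => z; rewrite /= mobius_rmorph.
Qed.

Lemma PGL2_sequencing_rmorph (g : F -> K) s :
  cancel f g -> cancel g f -> PGL2_sequencing s -> PGL2_sequencing (map (omap g) s).
Proof.
move=> fK gK [s_uniq s_size s_windows].
have omap_gK : cancel (omap g) (omap f) by case=> //= y; rewrite gK.
split.
- by rewrite (map_inj_uniq (can_inj omap_gK)).
- by rewrite size_map s_size !card_option (bij_eq_card (Bijective gK fK)).
- move=> i j lt_ij; rewrite size_map => j_small /PGL2_same_orbit_rmorph.
  by rewrite -!window_map (mapK omap_gK); apply: s_windows.
Qed.

Lemma exists_PGL2_sequencing_rmorph :
  #|K| = #|F| ->
  (exists s : seq (option F), PGL2_sequencing s) ->
  exists s : seq (option K), PGL2_sequencing s.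
Proof.
move=> cardKF [s s_seq].
have [g fK gK] := inj_card_bij (fmorph_inj f) (eq_leq (esym cardKF)).
by exists (map (omap g) s); apply: PGL2_sequencing_rmorph.
Qed.

End RmorphTransfer.

Section Decision.

Variables (K : finFieldType) (r : seq K).
Hypotheses (r_uniq : uniq r) (size_r : size r = #|K|).

Let points : seq (option K) := None :: map Some r.

Let mem_r x : x \in r.
Proof.
have [|_ ->] := uniq_min_size r_uniq (fun x _ => mem_enum K x).
  by rewrite -cardT size_r.
by rewrite mem_enum.
Qed.

Let points_uniq : uniq points.
Proof.
rewrite /= map_inj_uniq ?r_uniq ?andbT; last exact: Some_inj.
by apply/mapP => -[].
Qed.

Let mem_points z : z \in points.
Proof. by case: z => [x|] //; rewrite inE /= mem_map ?mem_r //; apply: Some_inj. Qed.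

Let size_points : size points = #|{: option K}|.
Proof. by rewrite /= size_map size_r card_option. Qed.

(* One matrix [[a, b], [c, d]] per element of PGL_2(K), normalised so that
   (c, d) is (0, 1) or (1, _). *)
Definition PGL2_reps : seq ((K * K) * (K * K)) :=
  filter (fun '((a, b), (c, d)) => a * d - b * c != 0)
    [seq (ab, cd) | ab <- [seq (a, b) | a <- r, b <- r],
                    cd <- (0, 1) :: [seq (1, d) | d <- r]].

Lemma PGL2_reps_complete a b c d : a * d - b * c != 0 ->
  exists2 g, g \in PGL2_reps & let: ((a', b'), (c', d')) := g in
                               mobius a' b' c' d' =1 mobius a b c d.
Proof.
move=> det_neq0; pose k := if c == 0 then d^-1 else c^-1.
have d_neq0 : c = 0 -> d != 0.
  by move=> c0; apply: contraNneq det_neq0 => d0; rewrite c0 d0 !mulr0 subrr.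
have k_neq0 : k != 0.
  by rewrite /k; case: (c =P 0) => [/d_neq0 | /eqP]; rewrite invr_eq0.
exists ((k * a, k * b), (k * c, k * d)); last exact: mobius_scale.
rewrite mem_filter; apply/andP; split.
  have -> : k * a * (k * d) - k * b * (k * c) = k * k * (a * d - b * c) by ring.
  by rewrite !mulf_neq0.
apply: allpairs_f; first by apply: allpairs_f; apply: mem_r.
rewrite /k inE; case: (c =P 0) => [c0 | /eqP c_neq0].
  by rewrite c0 mulr0 (mulVf (d_neq0 c0)) eqxx.
by rewrite mulVf // map_f ?orbT ?mem_r.
Qed.

Definition PGL2_same_orbitb (u v : seq (option K)) : bool :=
  has (fun '((a, b), (c, d)) => all2 (fun x y => mobius a b c d x == y) u v) PGL2_reps.

Lemma PGL2_same_orbitP u v : reflect (PGL2_same_orbit u v) (PGL2_same_orbitb u v).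
Proof.
have all2_mobius a b c d :
    all2 (fun x y => mobius a b c d x == y) u v = (map (mobius a b c d) u == v).
  by elim: u v => [|x u' IH] [|y v'] //=; rewrite eqseq_cons IH.
apply: (iffP hasP) => [[[[a b] [c d]]] | [a [b [c [d [det_neq0 uv]]]]]].
  by rewrite mem_filter all2_mobius => /andP[det_neq0 _] /eqP uv; exists a, b, c, d.
have [[[a' b'] [c' d']] g_rep g_mobius] := PGL2_reps_complete det_neq0.
by exists ((a', b'), (c', d')); rewrite // all2_mobius -uv (eq_map g_mobius).
Qed.

Definition distinct_window_orbitsb (s : seq (option K)) : bool :=
  all (fun j => all (fun i =>
    ~~ PGL2_same_orbitb (window 3 i s) (window 3 j s)) (iota 0 j)) (iota 0 (size s - 3)).

Lemma distinct_window_orbitsP s :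
  reflect (forall i j, (i < j)%N -> (j + 3 < size s)%N ->
             ~ PGL2_same_orbit (window 3 i s) (window 3 j s))
          (distinct_window_orbitsb s).
Proof.
apply: (iffP allP) => [all_j i j lt_ij j_small | distinct j].
  have j_mem : j \in iota 0 (size s - 3) by rewrite mem_iota ltn_subRL addnC j_small.
  have i_mem : i \in iota 0 j by rewrite mem_iota.
  by move=> /PGL2_same_orbitP; apply/negP; apply: (allP (all_j j j_mem)).
rewrite mem_iota ltn_subRL addnC => j_small; apply/allP => i; rewrite mem_iota => lt_ij.
by apply/PGL2_same_orbitP; apply: distinct.
Qed.

Lemma exists_PGL2_sequencingP :
  reflect (exists s : seq (option K), PGL2_sequencing s)
          (has distinct_window_orbitsb (permutations points)).
Proof.
apply: (iffP hasP) => [[s] | [s [s_uniq s_size s_windows]]].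
  rewrite mem_permutations => perm_s /distinct_window_orbitsP s_windows.
  exists s; split => //; first by rewrite (perm_uniq perm_s).
  by rewrite (perm_size perm_s).
exists s; last exact/distinct_window_orbitsP.
have [|_ s_full] := uniq_min_size s_uniq (fun z _ => mem_points z).
  by rewrite size_points s_size.
by rewrite mem_permutations perm_sym uniq_perm // => z; rewrite s_full.
Qed.

End Decision.

(* A global constant, so that [vm_compute] evaluates the numerals only once. *)
Definition F5_elems : seq 'F_5 := [:: 0; 1; 2; 3; 4].

Lemma no_PGL2_sequencing_F5 : ~ exists s : seq (option 'F_5), PGL2_sequencing s.
Proof.
have F5_uniq : uniq F5_elems by vm_compute.
have size_F5 : size F5_elems = #|'F_5| by rewrite card_Fp.
by move=> /(introT (exists_PGL2_sequencingP F5_uniq size_F5)); vm_compute.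
Qed.

(* [Gf4 a b] stands for a + b w, where w ^+ 2 = w + 1 over GF(2); the inverse
   of x != 0 is x ^+ 2 because x ^+ 3 = 1. *)
Variant gf4 : predArgType := Gf4 of bool & bool.

Definition gf4_coords (x : gf4) : bool * bool := let: Gf4 a b := x in (a, b).
Lemma gf4_coordsK : cancel gf4_coords (fun ab => Gf4 ab.1 ab.2). Proof. by case. Qed.
HB.instance Definition _ := Finite.copy gf4 (can_type gf4_coordsK).

Definition gf4_add (x y : gf4) : gf4 :=
  let: (Gf4 a b, Gf4 c d) := (x, y) in Gf4 (a (+) c) (b (+) d).
Definition gf4_mul (x y : gf4) : gf4 :=
  let: (Gf4 a b, Gf4 c d) := (x, y) in
  Gf4 (a && c (+) b && d) (a && d (+) b && c (+) b && d).
Definition gf4_inv (x : gf4) : gf4 := gf4_mul x x.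

Lemma gf4_addA : associative gf4_add. Proof. by do ![case]. Qed.
Lemma gf4_addC : commutative gf4_add. Proof. by do ![case]. Qed.
Lemma gf4_add0 : left_id (Gf4 false false) gf4_add. Proof. by do ![case]. Qed.
Lemma gf4_addxx : left_inverse (Gf4 false false) id gf4_add. Proof. by do ![case]. Qed.
HB.instance Definition _ :=
  GRing.isZmodule.Build gf4 gf4_addA gf4_addC gf4_add0 gf4_addxx.

Lemma gf4_mulA : associative gf4_mul. Proof. by do ![case]. Qed.
Lemma gf4_mulC : commutative gf4_mul. Proof. by do ![case]. Qed.
Lemma gf4_mul1 : left_id (Gf4 true false) gf4_mul. Proof. by do ![case]. Qed.
Lemma gf4_mulDl : left_distributive gf4_mul gf4_add. Proof. by do ![case]. Qed.
Lemma gf4_oner_neq0 : Gf4 true false != 0. Proof. by []. Qed.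
HB.instance Definition _ := GRing.Zmodule_isComNzRing.Build gf4
  gf4_mulA gf4_mulC gf4_mul1 gf4_mulDl gf4_oner_neq0.

Lemma gf4_mulVf (x : gf4) : x != 0 -> gf4_inv x * x = 1.
Proof. by case: x => [] [] []. Qed.
Lemma gf4_inv0 : gf4_inv 0 = 0. Proof. by []. Qed.
HB.instance Definition _ := GRing.ComNzRing_isField.Build gf4 gf4_mulVf gf4_inv0.

Lemma card_gf4 : #|gf4| = 4%N.
Proof.
have gf4_coords_bij : bijective gf4_coords by exists (fun ab => Gf4 ab.1 ab.2); case.
by rewrite (bij_eq_card gf4_coords_bij) card_prod card_bool.
Qed.

Definition gf4_elems : seq gf4 := [:: 0; 1; Gf4 false true; Gf4 true true].

Lemma no_PGL2_sequencing_gf4 : ~ exists s : seq (option gf4), PGL2_sequencing s.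
Proof.
have gf4_uniq : uniq gf4_elems by vm_compute.
by move=> /(introT (exists_PGL2_sequencingP gf4_uniq (esym card_gf4))); vm_compute.
Qed.

Section Gf4Embedding.

Variables (F : comNzRingType) (w : F).
Hypotheses (pchar2_F : 2%N \in [pchar F]) (w_sqr : w ^+ 2 = w + 1).

Definition gf4_embed (x : gf4) : F := let: Gf4 a b := x in a%:R + b%:R * w.

Lemma natr_addb (a b : bool) : (a (+) b)%:R = a%:R + b%:R :> F.
Proof. by case: a b => [] [] //=; rewrite ?addr0 ?add0r // addrr_pchar2. Qed.

Lemma gf4_embed_is_nmod_morphism : nmod_morphism gf4_embed.
Proof.
split; first by rewrite /= mul0r addr0.
by move=> [a b] [c d]; rewrite /= !natr_addb; ring.
Qed.

Lemma gf4_embed_is_monoid_morphism : monoid_morphism gf4_embed.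
Proof.
split; first by rewrite /= mul0r addr0.
move=> [a b] [c d]; rewrite /= !natr_addb -!mulnb !natrM.
apply/eqP; rewrite -subr_eq0; apply/eqP.
transitivity (b%:R * d%:R * (w + 1 - w ^+ 2) : F); first ring.
by rewrite w_sqr subrr mulr0.
Qed.

HB.instance Definition _ :=
  GRing.isNmodMorphism.Build gf4 F gf4_embed gf4_embed_is_nmod_morphism.
HB.instance Definition _ :=
  GRing.isMonoidMorphism.Build gf4 F gf4_embed gf4_embed_is_monoid_morphism.

Definition gf4_rmorphism : {rmorphism gf4 -> F} := gf4_embed.

End Gf4Embedding.

Lemma card4_exists_sqr_eq_add1 (F : finFieldType) :
  #|F| = 4%N -> exists w : F, w ^+ 2 = w + 1.
Proof.
move=> cardF.
have pchar2_F : 2%N \in [pchar F] by apply: (@card_finPcharP _ 2 2).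
have [w] : exists w : F, w \notin [:: 0; 1].
  apply/existsP; apply: contraT => /existsPn all01.
  have /subset_leq_card : F \subset [:: 0; 1 : F].
    by apply/subsetP => x _; rewrite -[_ \in _]negbK all01.
  by rewrite cardF => /leq_trans/(_ (card_size _)).
rewrite !inE negb_or => /andP[w_neq0 w_neq1]; exists w.
have w3 : w ^+ 3 = 1 by apply: (mulfI w_neq0); rewrite -exprS mulr1 -cardF expf_card.
have : (w - 1) * (w ^+ 2 + (w + 1)) = 0.
  by transitivity (w ^+ 3 - 1); [ring | rewrite w3 subrr].
move=> /eqP; rewrite mulf_eq0 subr_eq0 (negbTE w_neq1) addr_eq0 (oppr_pchar2 pchar2_F).
exact: eqP.
Qed.

(* [pPrimeCharType pcharRp] is R itself, viewed as an 'F_p-algebra. *)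
Definition Fp_rmorphism (R : nzRingType) p (pcharRp : p \in [pchar R]) :
  {rmorphism 'F_p -> R} :=
  in_alg (pPrimeCharType pcharRp) : {rmorphism 'F_p -> pPrimeCharType pcharRp}.

Theorem mainTheorem5 (F : finFieldType) :
  (#|F| = 4 \/ #|F| = 5)%N -> ~ exists s : seq (option F), PGL2_sequencing s.
Proof.
case=> cardF /exists_PGL2_sequencing_rmorph.
- have pchar2_F : 2%N \in [pchar F] by apply: (@card_finPcharP _ 2 2).
  have [w w_sqr] := card4_exists_sqr_eq_add1 cardF.
  move=> /(_ _ (gf4_rmorphism pchar2_F w_sqr)).
  by rewrite card_gf4 cardF => /(_ erefl); apply: no_PGL2_sequencing_gf4.
- have pchar5_F : 5%N \in [pchar F] by apply: (@card_finPcharP _ 5 1).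
  move=> /(_ _ (Fp_rmorphism pchar5_F)).
  by rewrite card_Fp // cardF => /(_ erefl); apply: no_PGL2_sequencing_F5.
Qed.
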